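(* (a) Let $h\in\omega$ and let $(p_i)_{i<\pi(h)}$ be conditions of $\tilde{\mathbb E}$ that all contain a common node $s$ of height $h$ which lies above (i.e., extends) the stem of each $p_i$. Then there is $q\in\tilde{\mathbb E}$ with $q\le p_i$ for all $i<\pi(h)$. (b) $\tilde{\mathbb E}$ is $(\rho,\pi)$-linked; in particular it is ccc. (c) The generic branch $\eta\in\lim(T^* )$ added by $\tilde{\mathbb E}$ is eventually different from every real of the ground model, i.e., for every $x\in\omega^\omega\cap V$ we have $\eta(n)\ne x(n)$ for all but finitely many $n$. (d) If $p\in\tilde{\mathbb E}$ is such that $\operatorname{loss}(p)$ is defined and $s=\operatorname{stem}(p)$, then for every $h>|s|$, \[ \frac{|p\cap\omega^h|}{|T^*\cap\omega^h\cap[s]|}\ge1-\tfrac12\operatorname{loss}(p). \]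
   Context: The tree $T^*\subseteq\omega^{<\omega}$ and associated functions are defined by simultaneous induction on the height $h\ge0$: $T^*\cap\omega^0=\{\langle\rangle\}$; given $T^*\cap\omega^h$, put $\rho(h)=\max(|T^*\cap\omega^h|,h+2)$, $\pi(h)=\big((h+1)^2\rho(h)^{h+1}\big)^{\rho(h)^h}$, $a(h)=\pi(h)^{h+2}$, $M(h)=a(h)^2$; for every $s\in T^*\cap\omega^h$ let $\Omega_s=\{s^\frown\ell:\ \ell<M(h)\}$ (this defines $T^*\cap\omega^{h+1}$). For integers $0\le n<M(h)$ set $\mu_h(n)=\log_{a(h)}\big(\frac{M(h)}{M(h)-n}\big)$ and $\mu_h(M(h))=\infty$; for $s$ of height $h$ and $A\subseteq\Omega_s$ put $\mu_s(A)=\mu_h(|A|)$. For a subtree $p\subseteq T^*$ and $s\in p$ let $\mu_s(p)=\mu_s(\{t\in p: t\in\Omega_s\})$; the stem of $p$ is its shortest splitting node, and ''$t\in p$ above the stem'' means $t\in p$ extends the stem. $\lim(p)$ is the set of $x\in\omega^\omega$ with $x\restriction n\in p$ for all $n$, and $[s]$ is the set of nodes of $T^*$ comparable with $s$. $\tilde{\mathbb E}$ is the set of subtrees $p\subseteq T^*$ whose stem has some height $h^*$ and such that $\mu_t(p)\ge1+\frac1{h^*}$ for all $t\in p$ above the stem (for $h^*=0$ this forces $p=T^*$), ordered by inclusion ($q\le p$ iff $q\subseteq p$). $\operatorname{loss}(p)$ is defined iff there is an integer $m\ge2$ such that the stem of $p$ has height $h^*>3m$ and $\mu_s(p)\ge1+\frac1m$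 for all $s\in p$ of height $\ge h^*$; then $\operatorname{loss}(p)=\frac1m$ for the maximal such $m$. For functions $f,g:\omega\to\omega$ tending to infinity, a forcing $Q$ is $(f,g)$-linked if there are sets $Q^i_j\subseteq Q$ ($i<\omega$, $j<f(i)$), each $g(i)$-linked (any $g(i)$ of its elements have a common extension), such that every $q\in Q$ belongs to $\bigcup_{j<f(i)}Q^i_j$ for all sufficiently large $i$. *)

From Stdlib Require Import Reals Arith List Lia.
Import ListNotations.

Definition rho_of (h N : nat) : nat := Nat.max N (h + 2).
Definition pi_of (h N : nat) : nat :=
  Nat.pow ((h + 1) * (h + 1) * Nat.pow (rho_of h N) (h + 1)) (Nat.pow (rho_of h N) h).
Definition a_of (h N : nat) : nat := Nat.pow (pi_of h N) (h + 2).
Definition M_of (h N : nat) : nat := Nat.pow (a_of h N) 2.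

(* levelsize h = |T* ∩ ω^h| : every node of height h has exactly M(h) successors. *)
Fixpoint levelsize (h : nat) : nat :=
  match h with
  | 0 => 1
  | S h' => levelsize h' * M_of h' (levelsize h')
  end.

Definition rho (h : nat) : nat := rho_of h (levelsize h).
Definition pi (h : nat) : nat := pi_of h (levelsize h).
Definition a (h : nat) : nat := a_of h (levelsize h).
Definition M (h : nat) : nat := M_of h (levelsize h).

Definition inT (t : list nat) : Prop :=
  forall i, i < length t -> nth i t 0 < M i.

(* Extended nonnegative reals: None = +∞. *)
Definition xR := option R.

Definition mu (h n : nat) : xR :=
  if n <? M h
  then Some (ln (INR (M h) / INR (M h - n)) / ln (INR (a h)))%R
  else None.

Definition xge (x y : xR) : Prop :=
  match y with
  | None => x = None
  | Some c => match x with None => True | Some r => (c <= r)%R end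
  end.

Definition tree := list nat -> bool.

Definition subtree (p : tree) : Prop :=
  p [] = true /\
  (forall t l, p (t ++ [l]) = true -> p t = true) /\
  (forall t, p t = true -> inT t).

Definition succ_count (p : tree) (s : list nat) : nat :=
  length (filter (fun l => p (s ++ [l])) (seq 0 (M (length s)))).

Definition mu_node (p : tree) (s : list nat) : xR := mu (length s) (succ_count p s).

Definition splitting (p : tree) (s : list nat) : Prop :=
  p s = true /\ 2 <= succ_count p s.

Definition is_stem (p : tree) (s : list nat) : Prop :=
  splitting p s /\ forall t, splitting p t -> length s <= length t.

Definition prefix (s t : list nat) : Prop := firstn (length s) t = s.

(* The bound 1 + 1/h*, with 1/0 = +∞. *)
Definition bound (hs : nat) : xR :=
  match hs with 0 => None | S _ => Some (1 + 1 / INR hs)%R end.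

Definition Etilde (p : tree) : Prop :=
  subtree p /\
  exists s, is_stem p s /\
    forall t, p t = true -> prefix s t -> xge (mu_node p t) (bound (length s)).

Definition leE (q p : tree) : Prop := forall t, q t = true -> p t = true.

Definition compatible (p q : tree) : Prop :=
  exists r, Etilde r /\ leE r p /\ leE r q.

Definition linked (k : nat) (Q : tree -> Prop) : Prop :=
  forall r : nat -> tree, (forall i, i < k -> Q (r i)) ->
    exists q, Etilde q /\ forall i, i < k -> leE q (r i).

Definition fg_linked (f g : nat -> nat) : Prop :=
  exists Q : nat -> nat -> tree -> Prop,
    (forall i j q, Q i j q -> Etilde q) /\
    (forall i j, j < f i -> linked (g i) (Q i j)) /\
    (forall q, Etilde q -> exists N, forall i, N <= i -> exists j, j < f i /\ Q i j q).

Definition ccc : Prop :=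
  forall A : tree -> Prop,
    (forall p, A p -> Etilde p) ->
    (forall p q, A p -> A q -> p <> q -> ~ compatible p q) ->
    exists f : tree -> nat, forall p q, A p -> A q -> f p = f q -> p = q.

(* m witnesses that loss(p) is defined (with stem of height hs). *)
Definition loss_ok (p : tree) (m : nat) : Prop :=
  2 <= m /\
  exists s, is_stem p s /\ 3 * m < length s /\
    forall t, p t = true -> length s <= length t ->
      xge (mu_node p t) (Some (1 + 1 / INR m)%R).

Definition is_loss (p : tree) (l : R) : Prop :=
  exists m, loss_ok p m /\ (forall m', loss_ok p m' -> m' <= m) /\ l = (1 / INR m)%R.

(* Number of nodes of p of height |s| + k extending s, enumerated inside T*. *)
Fixpoint count_ext (p : tree) (s : list nat) (k : nat) : nat :=
  match k with
  | 0 => if p s then 1 else 0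
  | S k' => fold_right Nat.add 0
              (map (fun l => count_ext p (s ++ [l]) k') (seq 0 (M (length s))))
  end.

Definition level_card (p : tree) (h : nat) : nat := count_ext p [] h.
(* |T* ∩ ω^h ∩ [s]| for h >= |s| *)
Definition cone_card (s : list nat) (h : nat) : nat :=
  count_ext (fun _ => true) s (h - length s).

(* At a node of height k with d missing successors, mu_k >= 1 + 1/H amounts to
   d^H <= a(k)^(H-1) (and to d = 0 when H = 0).
   (a) Above s, the intersection of the pi(h) conditions misses at most pi(h) times the
   largest single deficit, and since a(k) >= pi(h)^(h+2) it still meets the bound for a
   stem of height h^2 + h + 1; pruning it to the cone of a node of that height gives q.
   (b) By (a), the conditions whose stem lies below the j-th node of height i form a
   pi(i)-linked set, and there are |T* ∩ ω^i| <= rho(i) of them; as pi >= 2, antichains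
   inject into the countably many such sets.
   (c) Above a node w, the branches avoiding x miss at most one successor per node, so
   their cone is a condition with stem w, and (a) merges it with p.
   (d) Above the stem, a node of height n misses at most a(n) <= M(n) / 2^(n+2) of its
   M(n) = a(n)^2 successors, so by induction it keeps all but a 2^-(n+1) fraction of its
   full subtree; and 2^|s| > |s| > 3m. *)

From Stdlib Require Import Reals List Lia Lra Bool Cantor ClassicalEpsilon.
Import ListNotations.
Open Scope nat_scope.

Lemma pow_ge_base x n : 1 <= n -> x <= x ^ n.
Proof.
  intro Hn. destruct x as [|x]; [lia|].
  rewrite <- (Nat.pow_1_r (S x)) at 1. apply Nat.pow_le_mono_r; lia.
Qed.

Lemma pi_of_ge2 h N : 2 <= pi_of h N.
Proof.
  unfold pi_of. set (r := rho_of h N).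
  assert (Hr : 2 <= r) by (unfold r, rho_of; lia).
  assert (Hrh : 1 <= r ^ h) by (apply Nat.neq_0_lt_0, Nat.pow_nonzero; lia).
  assert (Hbase : 2 <= (h + 1) * (h + 1) * r ^ (h + 1)).
  { pose proof (pow_ge_base r (h + 1)). nia. }
  eapply Nat.le_trans; [exact Hbase|]. apply pow_ge_base. exact Hrh.
Qed.

Lemma pi_ge2 h : 2 <= pi h.
Proof. apply pi_of_ge2. Qed.

Lemma pow2_le_a h : 2 ^ (h + 2) <= a h.
Proof. apply Nat.pow_le_mono_l, pi_of_ge2. Qed.

Lemma a_ge2 h : 2 <= a h.
Proof.
  eapply Nat.le_trans; [|apply pow2_le_a].
  eapply Nat.le_trans; [|apply pow_ge_base]; lia.
Qed.

Lemma M_sqr h : M h = a h * a h.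
Proof. unfold M, M_of, a. simpl. lia. Qed.

Lemma M_ge4 h : 4 <= M h.
Proof. rewrite M_sqr. pose proof (a_ge2 h). nia. Qed.

Lemma levelsize_mono h k : h <= k -> levelsize h <= levelsize k.
Proof.
  induction 1 as [|k _ IH]; [lia|].
  change (levelsize (S k)) with (levelsize k * M k). pose proof (M_ge4 k). nia.
Qed.

Lemma pi_mono h k : h <= k -> pi h <= pi k.
Proof.
  intro Hhk. unfold pi, pi_of.
  assert (Hr : rho_of h (levelsize h) <= rho_of k (levelsize k)).
  { pose proof (levelsize_mono _ _ Hhk). unfold rho_of. lia. }
  set (r := rho_of h (levelsize h)) in *. set (r' := rho_of k (levelsize k)) in *.
  assert (2 <= r) by (unfold r, rho_of; lia).
  apply Nat.pow_le_mono.
  - apply Nat.neq_mul_0; split; [nia|]. apply Nat.pow_nonzero; lia.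
  - apply Nat.mul_le_mono; [nia|]. apply Nat.pow_le_mono; lia.
  - apply Nat.pow_le_mono; lia.
Qed.

Lemma pi_pow_le_a h k : h <= k -> pi h ^ (h + 2) <= a k.
Proof.
  intro Hhk. unfold a, a_of. fold (pi k).
  pose proof (pi_ge2 h). apply Nat.pow_le_mono; [lia| apply pi_mono; exact Hhk| lia].
Qed.

Definition prefixb (s t : list nat) : bool :=
  if list_eq_dec Nat.eq_dec (firstn (length s) t) s then true else false.

Lemma prefixb_spec s t : prefixb s t = true <-> prefix s t.
Proof. unfold prefixb, prefix. destruct list_eq_dec; split; congruence. Qed.

Lemma prefix_dec s t : {prefix s t} + {~ prefix s t}.
Proof.
  destruct (prefixb s t) eqn:E; [left | right]; rewrite <- prefixb_spec; congruence.
Qed.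

Lemma prefix_iff_app s t : prefix s t <-> exists r, t = s ++ r.
Proof.
  unfold prefix. split.
  - intro H. exists (skipn (length s) t). rewrite <- H at 1. symmetry. apply firstn_skipn.
  - intros [r ->]. rewrite firstn_app, Nat.sub_diag, firstn_O, app_nil_r, firstn_all. reflexivity.
Qed.

Lemma prefix_app s r : prefix s (s ++ r).
Proof. apply prefix_iff_app. eauto. Qed.

Lemma prefix_refl s : prefix s s.
Proof. rewrite <- (app_nil_r s) at 2. apply prefix_app. Qed.

Lemma prefix_nil t : prefix [] t.
Proof. apply (prefix_app [] t). Qed.

Lemma prefix_trans s t u : prefix s t -> prefix t u -> prefix s u.
Proof.
  rewrite !prefix_iff_app. intros [r1 ->] [r2 ->]. exists (r1 ++ r2). symmetry. apply app_assoc.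
Qed.

Lemma prefix_length s t : prefix s t -> length s <= length t.
Proof. rewrite prefix_iff_app. intros [r ->]. rewrite length_app. lia. Qed.

Lemma prefix_length_eq s t : prefix s t -> length t <= length s -> s = t.
Proof.
  rewrite prefix_iff_app. intros [[|x r] ->] H.
  - symmetry. apply app_nil_r.
  - rewrite length_app in H. simpl in H. lia.
Qed.

Lemma prefix_snoc_inv t u l : prefix t (u ++ [l]) -> prefix t u \/ t = u ++ [l].
Proof.
  rewrite !prefix_iff_app. intros [r Hr]. destruct r as [|x r] using rev_ind.
  - right. rewrite app_nil_r in Hr. auto.
  - left. exists r. rewrite app_assoc in Hr. apply app_inj_tail in Hr. apply Hr.
Qed.

Lemma prefix_nth u s : prefix u s -> forall i, i < length u -> nth i s 0 = nth i u 0.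
Proof. rewrite prefix_iff_app. intros [r ->] i Hi. apply app_nth1; auto. Qed.

Lemma prefix_next u s : prefix u s -> length u < length s ->
  prefix (u ++ [nth (length u) s 0]) s.
Proof.
  rewrite !prefix_iff_app. intros [[|x r] ->] H; rewrite length_app in H; simpl in H; [lia|].
  exists r. rewrite nth_middle, <- app_assoc. reflexivity.
Qed.

Lemma prefix_diverge s t : ~ prefix s t -> ~ prefix t s ->
  exists u x y r1 r2, x <> y /\ s = u ++ x :: r1 /\ t = u ++ y :: r2.
Proof.
  revert t. induction s as [|x s IH]; intros [|y t] H1 H2.
  - exfalso. apply H1, prefix_nil.
  - exfalso. apply H1, prefix_nil.
  - exfalso. apply H2, prefix_nil.
  - destruct (Nat.eq_dec x y) as [<-|Hxy].
    + destruct (IH t) as (u & x' & y' & r1 & r2 & Hne & -> & ->).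
      * intro P. apply H1. apply prefix_iff_app in P as [r ->]. apply (prefix_app (x :: s)).
      * intro P. apply H2. apply prefix_iff_app in P as [r ->]. apply (prefix_app (x :: t)).
      * exists (x :: u), x', y', r1, r2. auto.
    + exists [], x, y, s, t. auto.
Qed.

Lemma list_sum_map_le {A : Type} (g h : A -> nat) (L : list A) :
  (forall l, In l L -> g l <= h l) -> list_sum (map g L) <= list_sum (map h L).
Proof.
  induction L as [|x L IH]; simpl; intro H; [lia|].
  pose proof (H x (or_introl eq_refl)). pose proof (IH (fun l Hl => H l (or_intror Hl))). lia.
Qed.

Lemma list_sum_map_const {A : Type} c (L : list A) : list_sum (map (fun _ => c) L) = length L * c.
Proof. induction L as [|x L IH]; simpl; [reflexivity|]. rewrite IH. lia. Qed.

Lemma list_sum_map_single g n x : x < n -> (forall l, l <> x -> g l = 0) ->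
  list_sum (map g (seq 0 n)) = g x.
Proof.
  intros Hx Hg. induction n as [|n IH]; [lia|].
  rewrite seq_S, map_app, list_sum_app. simpl.
  destruct (Nat.eq_dec x n) as [<-|Hne].
  - rewrite (map_ext_in _ (fun _ => 0)), list_sum_map_const; [lia|].
    intros l Hl. apply in_seq in Hl. apply Hg. lia.
  - rewrite IH, (Hg n) by lia. lia.
Qed.

Lemma succ_count_le p u : succ_count p u <= M (length u).
Proof.
  unfold succ_count. rewrite <- (length_seq (M (length u)) 0) at 2. apply filter_length_le.
Qed.

Lemma succ_count_ext q r u : (forall l, q (u ++ [l]) = r (u ++ [l])) ->
  succ_count q u = succ_count r u.
Proof. intro H. unfold succ_count. f_equal. apply filter_ext. auto. Qed.

Lemma exists_succ p u : 1 <= succ_count p u ->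
  exists l, l < M (length u) /\ p (u ++ [l]) = true.
Proof.
  unfold succ_count. intro H.
  destruct (filter _ _) as [|l L] eqn:E; simpl in H; [lia|].
  assert (Hl : In l (filter (fun l => p (u ++ [l])) (seq 0 (M (length u)))))
    by (rewrite E; left; reflexivity).
  apply filter_In in Hl as [Hl Hp]. apply in_seq in Hl. exists l. split; [lia | exact Hp].
Qed.

Lemma succ_count_ge2 p u l1 l2 : l1 <> l2 -> l1 < M (length u) -> l2 < M (length u) ->
  p (u ++ [l1]) = true -> p (u ++ [l2]) = true -> 2 <= succ_count p u.
Proof.
  intros Hne H1 H2 P1 P2. unfold succ_count.
  change 2 with (length [l1; l2]). apply NoDup_incl_length.
  - repeat constructor; simpl; intuition.
  - intros y [<-|[<-|[]]]; apply filter_In; split; auto; apply in_seq; lia.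
Qed.

Lemma filter_length_le1 (f : nat -> bool) L c : NoDup L ->
  (forall l, In l L -> f l = true -> l = c) -> length (filter f L) <= 1.
Proof.
  intros ND H. change 1 with (length [c]). apply NoDup_incl_length.
  - apply NoDup_filter; auto.
  - intros y Hy. apply filter_In in Hy as [Hy Hf]. left. symmetry. auto.
Qed.

Lemma succ_count_le1 p u c : (forall l, p (u ++ [l]) = true -> l = c) -> succ_count p u <= 1.
Proof. intro H. apply (filter_length_le1 _ _ c); auto using seq_NoDup. Qed.

Definition deficit (p : tree) (u : list nat) : nat := M (length u) - succ_count p u.

Lemma deficit_filter p u :
  deficit p u = length (filter (fun l => negb (p (u ++ [l]))) (seq 0 (M (length u)))).
Proof.
  unfold deficit, succ_count.
  pose proof (filter_length (fun l => p (u ++ [l])) (seq 0 (M (length u)))) as E.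
  rewrite length_seq in E. lia.
Qed.

Lemma deficit_le1 p u c : (forall l, l < M (length u) -> l <> c -> p (u ++ [l]) = true) ->
  deficit p u <= 1.
Proof.
  intro H. rewrite deficit_filter. apply (filter_length_le1 _ _ c); [apply seq_NoDup|].
  intros l Hl Hf. apply in_seq in Hl.
  destruct (Nat.eq_dec l c) as [|Hne]; auto. rewrite H in Hf by lia. discriminate.
Qed.

Definition deficit_ok (H k d : nat) : Prop :=
  match H with 0 => d = 0 | S _ => d ^ H <= a k ^ (H - 1) end.

Lemma ln_le_iff (x y : R) : (0 < x)%R -> (0 < y)%R -> (ln x <= ln y <-> x <= y)%R.
Proof.
  intros Hx Hy. split; intro H.
  - destruct (Rle_lt_or_eq_dec _ _ H) as [Hlt|Heq].
    + left. apply ln_lt_inv; auto.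
    + right. apply ln_inv; auto.
  - destruct (Rle_lt_or_eq_dec _ _ H) as [Hlt | ->].
    + left. apply ln_increasing; auto.
    + right. reflexivity.
Qed.

Open Scope R_scope.

Lemma ln_sqr_div_ge_iff (A D : R) (H : nat) : 1 < A -> 1 <= D -> (1 <= H)%nat ->
  1 + 1 / INR H <= ln (A * A / D) / ln A <-> D ^ H <= A ^ (H - 1).
Proof.
  intros HA HD HH.
  assert (lA : 0 < ln A) by (rewrite <- ln_1; apply ln_increasing; lra).
  assert (HHp : 0 < INR H) by (apply lt_0_INR; lia).
  assert (Hscale : INR H * ((1 + 1 / INR H) * ln A) = (INR H + 1) * ln A) by (field; lra).
  assert (Hln : ln (A * A / D) / ln A * ln A = 2 * ln A - ln D).
  { unfold Rdiv. rewrite ln_mult, ln_mult, ln_Rinv by (try apply Rinv_0_lt_compat; nra).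
    field. lra. }
  rewrite <- (ln_le_iff (D ^ H)), !ln_pow, minus_INR by (try apply pow_lt; lra || lia).
  simpl INR. split; intro X.
  - apply Rmult_le_compat_r with (r := ln A) in X; [|lra]. rewrite Hln in X.
    apply Rmult_le_compat_l with (r := INR H) in X; [|lra]. nra.
  - apply Rmult_le_reg_r with (ln A); [lra|]. rewrite Hln.
    apply Rmult_le_reg_l with (INR H); [lra|]. nra.
Qed.

Close Scope R_scope.

Lemma mu_ge_bound_iff (H k n : nat) : n <= M k ->
  xge (mu k n) (bound H) <-> deficit_ok H k (M k - n).
Proof.
  intro Hn. unfold mu, bound, deficit_ok.
  destruct (Nat.ltb_spec n (M k)) as [Hlt|Hge]; destruct H as [|H]; cbn [xge].
  - split; [discriminate | lia].
  - pose proof (a_ge2 k). rewrite M_sqr at 1. rewrite mult_INR.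
    rewrite ln_sqr_div_ge_iff, <- !pow_INR by (try apply lt_1_INR; try apply (le_INR 1); lia).
    split; [apply INR_le | apply le_INR].
  - split; [lia | reflexivity].
  - split; [intros _ | tauto]. replace (M k - n) with 0 by lia. rewrite Nat.pow_0_l by lia. lia.
Qed.

Lemma mu_node_ge_bound_iff (p : tree) (u : list nat) (H : nat) :
  xge (mu_node p u) (bound H) <-> deficit_ok H (length u) (deficit p u).
Proof. apply mu_ge_bound_iff, succ_count_le. Qed.

Lemma deficit_ok_le_a H k d : deficit_ok H k d -> d <= a k.
Proof.
  destruct H as [|H]; cbn [deficit_ok]; [lia|]. intro Hd. pose proof (a_ge2 k).
  destruct (Nat.le_gt_cases d (a k)) as [|Hlt]; [assumption|].
  assert (a k ^ S H < d ^ S H) by (apply Nat.pow_lt_mono_l; lia).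
  assert (a k ^ (S H - 1) <= a k ^ S H) by (apply Nat.pow_le_mono_r; lia). lia.
Qed.

Lemma deficit_ok_succ_count_ge2 H p u :
  deficit_ok H (length u) (deficit p u) -> 2 <= succ_count p u.
Proof.
  intro Hd. apply deficit_ok_le_a in Hd. unfold deficit in Hd.
  pose proof (succ_count_le p u). rewrite M_sqr in *. pose proof (a_ge2 (length u)). nia.
Qed.

Lemma pow_le_pow_pred_mono d A H H' : 1 <= H -> H <= H' -> 1 <= A ->
  d ^ H <= A ^ (H - 1) -> d ^ H' <= A ^ (H' - 1).
Proof.
  intros H1 H2 HA Hd. apply (Nat.pow_le_mono_l_iff _ _ H); [lia|].
  rewrite <- !Nat.pow_mul_r, Nat.mul_comm, Nat.pow_mul_r.
  eapply Nat.le_trans; [apply Nat.pow_le_mono_l; exact Hd|].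
  rewrite <- Nat.pow_mul_r. apply Nat.pow_le_mono_r; nia.
Qed.

Lemma deficit_ok_weaken H H' k d : H <= H' -> deficit_ok H k d -> deficit_ok H' k d.
Proof.
  pose proof (a_ge2 k). intro HH. destruct H as [|H], H' as [|H']; cbn [deficit_ok]; try lia.
  - intros ->. rewrite Nat.pow_0_l by lia. lia.
  - apply (pow_le_pow_pred_mono _ _ (S H)); lia.
Qed.

Lemma subtree_prefix_closed p t u : subtree p -> p t = true -> prefix u t -> p u = true.
Proof.
  intros (_ & Hsnoc & _) Ht Hp. apply prefix_iff_app in Hp as [r ->].
  induction r as [|x r IH] using rev_ind.
  - rewrite app_nil_r in Ht. exact Ht.
  - apply IH. rewrite app_assoc in Ht. eapply Hsnoc; eauto.
Qed.

Lemma inT_snoc u l : inT (u ++ [l]) -> l < M (length u).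
Proof.
  intro H. specialize (H (length u)). rewrite length_app, nth_middle in H. simpl in H. apply H. lia.
Qed.

Lemma stem_comparable p st t : subtree p -> is_stem p st -> p t = true ->
  prefix st t \/ prefix t st.
Proof.
  intros Hs [[Hst _] Hmin] Ht.
  destruct (prefix_dec st t) as [|H1]; auto. destruct (prefix_dec t st) as [|H2]; auto.
  exfalso. destruct (prefix_diverge _ _ H1 H2) as (u & x & y & r1 & r2 & Hxy & Est & Et).
  assert (Pux : p (u ++ [x]) = true).
  { apply (subtree_prefix_closed p st); auto. rewrite Est.
    replace (u ++ x :: r1) with ((u ++ [x]) ++ r1) by (rewrite <- app_assoc; reflexivity).
    apply prefix_app. }
  assert (Puy : p (u ++ [y]) = true).
  { apply (subtree_prefix_closed p t); auto. rewrite Et.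
    replace (u ++ y :: r2) with ((u ++ [y]) ++ r2) by (rewrite <- app_assoc; reflexivity).
    apply prefix_app. }
  assert (Hu : p u = true) by (apply (subtree_prefix_closed p _ u Hs Pux), prefix_app).
  destruct Hs as (_ & _ & HT).
  assert (Hsplit : splitting p u).
  { split; auto. apply (succ_count_ge2 p u x y); auto using inT_snoc. }
  apply Hmin in Hsplit. rewrite Est, length_app in Hsplit. simpl in Hsplit. lia.
Qed.

Lemma stem_unique p s1 s2 : subtree p -> is_stem p s1 -> is_stem p s2 -> s1 = s2.
Proof.
  intros Hs H1 H2.
  assert (length s1 = length s2) by (apply Nat.le_antisymm; [apply H1, H2 | apply H2, H1]).
  destruct (stem_comparable p s1 s2 Hs H1 (proj1 (proj1 H2))) as [P|P].
  - apply prefix_length_eq; auto; lia.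
  - symmetry. apply prefix_length_eq; auto; lia.
Qed.

Lemma stem_of_comparable q t : q t = true -> 2 <= succ_count q t ->
  (forall u, q u = true -> prefix u t \/ prefix t u) -> is_stem q t.
Proof.
  intros Ht Hs Hc. split; [split; assumption|].
  intros u [Hu Hsu]. destruct (Nat.le_gt_cases (length t) (length u)) as [|Hlt]; [assumption|].
  exfalso. enough (succ_count q u <= 1) by lia.
  apply (succ_count_le1 _ _ (nth (length u) t 0)). intros l Hl.
  destruct (Hc _ Hl) as [P|P].
  - rewrite (prefix_nth _ _ P (length u)), nth_middle by (rewrite length_app; simpl; lia).
    reflexivity.
  - assert (Ht' : t = u ++ [l]).
    { apply prefix_length_eq; auto. rewrite length_app. simpl. lia. }
    rewrite Ht', nth_middle. reflexivity.
Qed.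

Lemma Etilde_deficit_ok p st u : Etilde p -> is_stem p st -> p u = true -> prefix st u ->
  deficit_ok (length st) (length u) (deficit p u).
Proof.
  intros (Hs & st' & Hst' & Hmu) Hst Hu Hp.
  rewrite (stem_unique p st st') by auto.
  apply mu_node_ge_bound_iff, Hmu; auto. rewrite <- (stem_unique p st st'); auto.
Qed.

Lemma extend_to_height (q : tree) s :
  (forall u, q u = true -> prefix s u -> 1 <= succ_count q u) ->
  forall j u, q u = true -> prefix s u ->
  exists w, length w = length u + j /\ prefix u w /\ q w = true.
Proof.
  intros Hsucc j. induction j as [|j IH]; intros u Hu Hs.
  - exists u. split; [lia|]. split; [apply prefix_refl | exact Hu].
  - destruct (exists_succ q u (Hsucc u Hu Hs)) as (l & _ & Hq).
    destruct (IH (u ++ [l])) as (w & Hw & Hlw & Hqw); auto.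
    { eapply prefix_trans; [exact Hs | apply prefix_app]. }
    exists w. rewrite length_app in Hw. simpl in Hw. split; [lia|]. split; [|exact Hqw].
    eapply prefix_trans; [apply prefix_app | exact Hlw].
Qed.

Lemma Etilde_extend p st : Etilde p -> is_stem p st ->
  forall j, exists w, length w = length st + j /\ prefix st w /\ p w = true.
Proof.
  intros HE Hst j. apply (extend_to_height p st); [| apply Hst | apply prefix_refl].
  intros u Hu Hp. enough (2 <= succ_count p u) by lia.
  eapply deficit_ok_succ_count_ge2, Etilde_deficit_ok; eauto.
Qed.

Definition comparableb (s t : list nat) : bool := prefixb s t || prefixb t s.

Lemma comparableb_spec s t : comparableb s t = true <-> prefix s t \/ prefix t s.
Proof. unfold comparableb. rewrite orb_true_iff, !prefixb_spec. reflexivity. Qed.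

Lemma comparableb_snoc u l t : comparableb (u ++ [l]) t = true -> comparableb u t = true.
Proof.
  rewrite !comparableb_spec. intros [P|P].
  - left. eapply prefix_trans; [apply prefix_app | exact P].
  - apply prefix_snoc_inv in P as [P | ->]; [right; exact P | left; apply prefix_app].
Qed.

Definition cone (I : tree) (t : list nat) : tree := fun u => comparableb u t && I u.

Lemma cone_le I t : leE (cone I t) I.
Proof. intros u Hu. apply andb_true_iff in Hu. apply Hu. Qed.

Lemma cone_deficit I t u : prefix t u -> deficit (cone I t) u = deficit I u.
Proof.
  intro Htu. unfold deficit. f_equal. apply succ_count_ext. intro l. unfold cone.
  replace (comparableb (u ++ [l]) t) with true; [reflexivity|].
  symmetry. apply comparableb_spec. right. eapply prefix_trans; [exact Htu | apply prefix_app].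
Qed.

Lemma cone_Etilde I t : subtree I -> I t = true ->
  (forall u, I u = true -> prefix t u -> deficit_ok (length t) (length u) (deficit I u)) ->
  Etilde (cone I t) /\ is_stem (cone I t) t.
Proof.
  intros HI It Hdef.
  assert (Hcone : forall u, cone I t u = true -> I u = true /\ (prefix u t \/ prefix t u)).
  { intros u Hu. apply andb_true_iff in Hu as [Hc Hu].
    split; [exact Hu | apply comparableb_spec, Hc]. }
  assert (Ht : cone I t t = true).
  { unfold cone. rewrite It, andb_true_r. apply comparableb_spec. left. apply prefix_refl. }
  assert (Hdef' : forall u, cone I t u = true -> prefix t u ->
                   deficit_ok (length t) (length u) (deficit (cone I t) u)).
  { intros u Hu Htu. rewrite cone_deficit by exact Htu. apply Hdef; [apply Hcone, Hu | exact Htu]. }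
  assert (Hstem : is_stem (cone I t) t).
  { apply stem_of_comparable; [exact Ht | | intros u Hu; apply Hcone, Hu].
    apply (deficit_ok_succ_count_ge2 (length t)), Hdef'; [exact Ht | apply prefix_refl]. }
  split; [|exact Hstem]. split.
  - destruct HI as (Hnil & Hsnoc & HT). split; [|split].
    + unfold cone. rewrite Hnil, andb_true_r. apply comparableb_spec. left. apply prefix_nil.
    + intros u l Hu. apply andb_true_iff in Hu as [Hc Hu].
      apply andb_true_iff. split; [eapply comparableb_snoc, Hc | eapply Hsnoc, Hu].
    + intros u Hu. apply HT, Hcone, Hu.
  - exists t. split; [exact Hstem|]. intros u Hu Htu.
    apply mu_node_ge_bound_iff, Hdef'; assumption.
Qed.

Fixpoint inter (p : nat -> tree) (n : nat) : tree :=
  match n with 0 => fun _ => true | S n' => fun u => inter p n' u && p n' u end.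

Lemma inter_spec p n u : inter p n u = true <-> forall i, i < n -> p i u = true.
Proof.
  induction n as [|n IH]; simpl; [split; auto; intros; lia|].
  rewrite andb_true_iff, IH. split.
  - intros [A B] i Hi. destruct (Nat.eq_dec i n) as [->|]; auto. apply A. lia.
  - intro A. split; auto.
Qed.

Lemma inter_le p n i : i < n -> leE (inter p n) (p i).
Proof. intros Hi u Hu. apply (proj1 (inter_spec p n u) Hu i Hi). Qed.

Lemma inter_subtree p n : 0 < n -> (forall i, i < n -> subtree (p i)) -> subtree (inter p n).
Proof.
  intros Hn Hs. split; [|split].
  - apply inter_spec. intros i Hi. apply Hs, Hi.
  - intros t l Ht. apply inter_spec. intros i Hi.
    apply (subtree_prefix_closed (p i) (t ++ [l])); [apply Hs, Hi | | apply prefix_app].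
    apply (inter_le p n i Hi), Ht.
  - intros t Ht. apply (Hs 0 Hn), (inter_le p n 0 Hn), Ht.
Qed.

Lemma filter_andb_miss (f g : nat -> bool) L :
  length L - length (filter (fun l => f l && g l) L) <=
  (length L - length (filter f L)) + (length L - length (filter g L)).
Proof.
  induction L as [|x L IH]; [simpl; lia|].
  pose proof (filter_length_le f L). pose proof (filter_length_le g L).
  pose proof (filter_length_le (fun l => f l && g l) L).
  cbn [filter length]. destruct (f x), (g x); cbn [andb length]; lia.
Qed.

Lemma deficit_inter p n u :
  deficit (inter p n) u <= list_sum (map (fun i => deficit (p i) u) (seq 0 n)).
Proof.
  induction n as [|n IH].
  - unfold deficit, succ_count. cbn [inter]. rewrite filter_true, length_seq. simpl. lia.
  - rewrite seq_S, map_app, list_sum_app. simpl.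
    unfold deficit, succ_count in *. cbn [inter].
    pose proof (filter_andb_miss (fun l => inter p n (u ++ [l])) (fun l => p n (u ++ [l]))
                  (seq 0 (M (length u)))) as Hmiss.
    rewrite length_seq in Hmiss. lia.
Qed.

Lemma exists_max_pow_le (d : nat -> nat) n h B : 1 <= h -> (forall i, i < n -> d i ^ h <= B) ->
  exists m, m ^ h <= B /\ forall i, i < n -> d i <= m.
Proof.
  intros Hh Hd. induction n as [|n IH].
  - exists 0. split; [rewrite Nat.pow_0_l; lia | intros; lia].
  - destruct IH as (m & Hm & Hle); [intros; apply Hd; lia|].
    exists (Nat.max m (d n)). split.
    + destruct (Nat.max_spec m (d n)) as [[_ ->]|[_ ->]]; auto.
    + intros i Hi. destruct (Nat.eq_dec i n) as [->|]; [lia|]. specialize (Hle i). lia.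
Qed.

(* [D] is the deficit of an intersection of [P] conditions, each with deficit at most [m]. *)
Lemma pow_le_pow_pred_mul P A D m h H : 1 <= h -> h <= H -> 1 <= A -> D <= P * m ->
  m ^ h <= A ^ (h - 1) -> P ^ (h * H) <= A ^ (H - h) -> D ^ H <= A ^ (H - 1).
Proof.
  intros Hh HH HA HD Hm HP.
  apply (Nat.pow_le_mono_l_iff _ _ h); [lia|]. rewrite <- !Nat.pow_mul_r.
  eapply Nat.le_trans; [apply Nat.pow_le_mono_l; exact HD|].
  rewrite Nat.pow_mul_l.
  replace (m ^ (H * h)) with ((m ^ h) ^ H) by (rewrite <- Nat.pow_mul_r; f_equal; lia).
  eapply Nat.le_trans.
  { apply Nat.mul_le_mono; [rewrite Nat.mul_comm; exact HP | apply Nat.pow_le_mono_l; exact Hm]. }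
  rewrite <- Nat.pow_mul_r, <- Nat.pow_add_r. apply Nat.pow_le_mono_r; [lia|]. nia.
Qed.

Lemma inter_deficit_ok h p s : length s = h ->
  (forall i, i < pi h -> Etilde (p i) /\ exists st, is_stem (p i) st /\ prefix st s) ->
  forall u, inter p (pi h) u = true -> prefix s u ->
  deficit_ok (h * h + h + 1) (length u) (deficit (inter p (pi h)) u).
Proof.
  intros Hl Hp u Hu Hsu.
  assert (Hk : h <= length u) by (subst; apply prefix_length, Hsu).
  assert (Hi : forall i, i < pi h -> deficit_ok h (length u) (deficit (p i) u)).
  { intros i Hi. destruct (Hp i Hi) as (HE & st & Hst & Hsts).
    apply (deficit_ok_weaken (length st)); [subst; apply prefix_length, Hsts|].
    apply Etilde_deficit_ok; auto.
    - apply (inter_le p (pi h) i Hi), Hu.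
    - eapply prefix_trans; eauto. }
  pose proof (deficit_inter p (pi h) u) as HD.
  pose proof (a_ge2 (length u)).
  destruct h as [|h'].
  - enough (Hz : deficit (inter p (pi 0)) u = 0) by (rewrite Hz; simpl; lia).
    apply Nat.le_0_r. eapply Nat.le_trans; [exact HD|].
    eapply Nat.le_trans; [apply (list_sum_map_le _ (fun _ => 0)) | rewrite list_sum_map_const; lia].
    intros i Hin. apply in_seq in Hin. specialize (Hi i (proj2 Hin)). cbn [deficit_ok] in Hi. lia.
  - set (h := S h') in *.
    destruct (exists_max_pow_le (fun i => deficit (p i) u) (pi h) h (a (length u) ^ (h - 1)))
      as (m & Hm & Hmi); [lia | exact Hi |].
    replace (h * h + h + 1) with (S (h * h + h)) by lia. cbn [deficit_ok].
    apply (pow_le_pow_pred_mul (pi h) _ _ m h); [lia | lia | lia | | exact Hm |].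
    + eapply Nat.le_trans; [exact HD|].
      eapply Nat.le_trans; [apply (list_sum_map_le _ (fun _ => m)) |].
      * intros i Hin. apply in_seq in Hin. apply Hmi. lia.
      * rewrite list_sum_map_const, length_seq. lia.
    + eapply Nat.le_trans; [|apply Nat.pow_le_mono_l, (pi_pow_le_a h (length u) Hk)].
      rewrite <- Nat.pow_mul_r. apply Nat.pow_le_mono_r; [pose proof (pi_ge2 h); lia | nia].
Qed.

Theorem common_extension h p s : length s = h ->
  (forall i, i < pi h -> Etilde (p i)) ->
  (forall i, i < pi h -> p i s = true /\ exists st, is_stem (p i) st /\ prefix st s) ->
  exists q, Etilde q /\ forall i, i < pi h -> leE q (p i).
Proof.
  intros Hl HE Hs.
  set (I := inter p (pi h)).
  assert (Hpi : 0 < pi h) by (pose proof (pi_ge2 h); lia).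
  assert (HI : subtree I) by (apply inter_subtree; [exact Hpi | intros i Hi; apply HE, Hi]).
  assert (Hdef := inter_deficit_ok h p s Hl (fun i Hi => conj (HE i Hi) (proj2 (Hs i Hi)))).
  fold I in Hdef.
  assert (HIs : I s = true) by (apply inter_spec; intros i Hi; apply Hs, Hi).
  destruct (extend_to_height I s) with (j := h * h + 1) (u := s) as (t & Ht & Hst & HIt);
    [| exact HIs | apply prefix_refl |].
  { intros u Hu Hsu. enough (2 <= succ_count I u) by lia.
    eapply deficit_ok_succ_count_ge2, Hdef; eauto. }
  destruct (cone_Etilde I t HI HIt) as [Hq _].
  { intros u Hu Htu. replace (length t) with (h * h + h + 1) by lia.
    apply Hdef; [exact Hu | eapply prefix_trans; eauto]. }
  exists (cone I t). split; [exact Hq|].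
  intros i Hi u Hu. apply (inter_le p (pi h) i Hi), (cone_le I t), Hu.
Qed.

(* Mixed-radix enumeration of [T* ∩ ω^i]. *)
Fixpoint node (i j : nat) : list nat :=
  match i with 0 => [] | S i' => node i' (j / M i') ++ [j mod M i'] end.

Lemma node_length i j : length (node i j) = i.
Proof.
  revert j; induction i as [|i IH]; intro j; simpl; [reflexivity|].
  rewrite length_app, IH. simpl. lia.
Qed.

Lemma node_surj i t : length t = i -> inT t -> exists j, j < levelsize i /\ node i j = t.
Proof.
  revert t. induction i as [|i IH]; intros t Hl HT.
  - destruct t; simpl in Hl; [|lia]. exists 0. simpl. auto.
  - destruct (exists_last (l := t)) as (u & x & ->); [intros ->; simpl in Hl; lia|].
    rewrite length_app in Hl. simpl in Hl.
    assert (Hx : x < M i) by (replace i with (length u) by lia; apply inT_snoc, HT).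
    destruct (IH u) as (j & Hj & Hn); [lia| |].
    { intros k Hk. specialize (HT k). rewrite length_app, app_nth1 in HT by lia. apply HT. lia. }
    exists (j * M i + x). pose proof (M_ge4 i). split.
    + change (levelsize (S i)) with (levelsize i * M i). nia.
    + simpl. rewrite Nat.div_add_l, Nat.div_small, Nat.add_0_r, Hn by lia.
      rewrite Nat.add_comm, Nat.Div0.mod_add, Nat.mod_small by lia. reflexivity.
Qed.

Definition linked_class (i j : nat) (q : tree) : Prop :=
  Etilde q /\ q (node i j) = true /\ exists st, is_stem q st /\ prefix st (node i j).

Lemma fg_linked_rho_pi : fg_linked rho pi.
Proof.
  exists linked_class. split; [|split].
  - intros i j q Hq. apply Hq.
  - intros i j _ r Hr. apply (common_extension i r (node i j)); [apply node_length | |];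
      intros k Hk; apply Hr, Hk.
  - intros q Hq. pose proof Hq as (Hs & st & Hst & _).
    exists (length st). intros i Hi.
    destruct (Etilde_extend q st Hq Hst (i - length st)) as (w & Hw & Hsw & Hqw).
    destruct (node_surj i w) as (j & Hj & <-); [lia | apply Hs, Hqw |].
    exists j. split; [unfold rho, rho_of; lia|]. split; [exact Hq|]. eauto.
Qed.

Lemma fg_linked_ccc f g : (forall i, 2 <= g i) -> fg_linked f g -> ccc.
Proof.
  intros Hg (Q & _ & Hlink & Hcov) A HA Hanti.
  set (idx := fun p =>
    epsilon (inhabits (0, 0)) (fun ij => snd ij < f (fst ij) /\ Q (fst ij) (snd ij) p)).
  assert (Hidx : forall p, Etilde p ->
                   snd (idx p) < f (fst (idx p)) /\ Q (fst (idx p)) (snd (idx p)) p).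
  { intros p Hp. apply epsilon_spec.
    destruct (Hcov p Hp) as (N & HN). destruct (HN N (le_n N)) as (j & Hj & HQ).
    exists (N, j). auto. }
  exists (fun p => Cantor.to_nat (idx p)).
  intros p q Hp Hq E. apply Cantor.to_nat_inj in E.
  destruct (Hidx p (HA p Hp)) as [Hj Qp]. destruct (Hidx q (HA q Hq)) as [_ Qq].
  rewrite E in Qp, Hj.
  destruct (classic (p = q)) as [|Hne]; [assumption|]. exfalso.
  apply (Hanti p q Hp Hq Hne).
  destruct (Hlink _ _ Hj (fun k => if k =? 0 then p else q)) as (r & Hr & Hle).
  { intros k _. destruct (k =? 0); assumption. }
  pose proof (Hg (fst (idx q))).
  exists r. split; [exact Hr|]. split; [apply (Hle 0) | apply (Hle 1)]; lia.
Qed.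

Definition inTb (u : list nat) : bool := forallb (fun i => nth i u 0 <? M i) (seq 0 (length u)).

Lemma inTb_spec u : inTb u = true <-> inT u.
Proof.
  unfold inTb, inT. rewrite forallb_forall. split.
  - intros H i Hi. apply Nat.ltb_lt, H, in_seq. lia.
  - intros H i Hi. apply in_seq in Hi. apply Nat.ltb_lt, H. lia.
Qed.

Definition avoidsb (n : nat) (x : nat -> nat) (u : list nat) : bool :=
  forallb (fun m => (m <? n) || negb (nth m u 0 =? x m)) (seq 0 (length u)).

Lemma avoidsb_spec n x u :
  avoidsb n x u = true <-> forall m, n <= m -> m < length u -> nth m u 0 <> x m.
Proof.
  unfold avoidsb. rewrite forallb_forall. split.
  - intros H m Hn Hm E. specialize (H m (proj2 (in_seq _ _ _) (conj (Nat.le_0_l _) Hm))).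
    rewrite E, Nat.eqb_refl, orb_false_r in H. apply Nat.ltb_lt in H. lia.
  - intros H m Hm. apply in_seq in Hm. destruct (Nat.ltb_spec m n); [reflexivity|].
    apply negb_true_iff, Nat.eqb_neq, H; lia.
Qed.

Definition avoiding (n : nat) (x : nat -> nat) : tree := fun u => inTb u && avoidsb n x u.

Lemma avoiding_spec n x u : avoiding n x u = true <->
  inT u /\ forall m, n <= m -> m < length u -> nth m u 0 <> x m.
Proof. unfold avoiding. rewrite andb_true_iff, inTb_spec, avoidsb_spec. reflexivity. Qed.

Lemma avoiding_snoc n x u l : avoiding n x (u ++ [l]) = true <->
  avoiding n x u = true /\ l < M (length u) /\ (n <= length u -> l <> x (length u)).
Proof.
  rewrite !avoiding_spec. unfold inT. rewrite length_app. simpl.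
  assert (Hnth : forall i, i < length u -> nth i (u ++ [l]) 0 = nth i u 0)
    by (intros; apply app_nth1; lia).
  split.
  - intros [HT Hav]. repeat split.
    + intros i Hi. rewrite <- Hnth by lia. apply HT. lia.
    + intros m Hm Hmu. rewrite <- Hnth by lia. apply Hav; lia.
    + specialize (HT (length u)). rewrite nth_middle in HT. apply HT. lia.
    + intro Hn. specialize (Hav (length u)). rewrite nth_middle in Hav. apply Hav; lia.
  - intros ((HT & Hav) & Hl & Hx). split.
    + intros i Hi. destruct (Nat.eq_dec i (length u)) as [->|]; [rewrite nth_middle; exact Hl|].
      rewrite Hnth by lia. apply HT. lia.
    + intros m Hm Hmu. destruct (Nat.eq_dec m (length u)) as [->|]; [rewrite nth_middle; auto|].
      rewrite Hnth by lia. apply Hav; lia.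
Qed.

Lemma avoiding_subtree n x : subtree (avoiding n x).
Proof.
  split; [|split].
  - apply avoiding_spec. split; [intros i Hi; simpl in Hi; lia | intros m _ Hm; simpl in Hm; lia].
  - intros t l. rewrite avoiding_snoc. tauto.
  - intros t Ht. apply (avoiding_spec n x t), Ht.
Qed.

Lemma avoiding_deficit_le1 n x u : avoiding n x u = true -> deficit (avoiding n x) u <= 1.
Proof.
  intro Hu. apply (deficit_le1 _ _ (x (length u))). intros l Hl Hx.
  apply avoiding_snoc. auto.
Qed.

Theorem eventually_different_dense (x : nat -> nat) (p : tree) : Etilde p ->
  exists q, Etilde q /\ leE q p /\
    exists n, forall t, q t = true -> forall m, n <= m -> m < length t -> nth m t 0 <> x m.
Proof.
  intro HE. pose proof HE as (Hs & st & Hst & _).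
  destruct (Etilde_extend p st HE Hst 1) as (w & Hw & Hsw & Hpw).
  set (I := avoiding (length w) x).
  assert (HIw : I w = true).
  { apply avoiding_spec. split; [apply Hs, Hpw | intros; lia]. }
  destruct (cone_Etilde I w (avoiding_subtree _ _) HIw) as [HcE Hcs].
  { intros u Hu _. pose proof (avoiding_deficit_le1 _ _ _ Hu) as Hd.
    destruct (length w) as [|n] eqn:E; [lia|]. cbn [deficit_ok].
    eapply Nat.le_trans; [apply Nat.pow_le_mono_l, Hd|]. rewrite Nat.pow_1_l.
    apply Nat.neq_0_lt_0, Nat.pow_nonzero. pose proof (a_ge2 (length u)). lia. }
  set (pp := fun i => if i =? 1 then cone I w else p).
  destruct (common_extension (length w) pp w eq_refl) as (q & Hq & Hle).
  - intros i _. unfold pp. destruct (i =? 1); assumption.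
  - intros i _. unfold pp. destruct (i =? 1).
    + split; [apply Hcs | exists w; split; [exact Hcs | apply prefix_refl]].
    + split; [exact Hpw | exists st; auto].
  - pose proof (pi_ge2 (length w)).
    exists q. split; [exact Hq|]. split; [apply (Hle 0); lia|].
    exists (length w). intros t Ht.
    apply avoiding_spec, (cone_le I w), (Hle 1); [lia | exact Ht].
Qed.

Lemma count_ext_absent p : subtree p -> forall k u, p u = false -> count_ext p u k = 0.
Proof.
  intros Hs k. induction k as [|k IH]; intros u Hu; cbn [count_ext]; [rewrite Hu; reflexivity|].
  apply Nat.le_0_r.
  eapply Nat.le_trans; [apply (list_sum_map_le _ (fun _ => 0)) | rewrite list_sum_map_const; lia].
  intros l _. rewrite IH; [lia|].
  destruct (p (u ++ [l])) eqn:E; [|reflexivity].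
  rewrite (subtree_prefix_closed p _ u Hs E (prefix_app u [l])) in Hu. discriminate.
Qed.

Fixpoint full_count (n k : nat) : nat :=
  match k with 0 => 1 | S k' => M n * full_count (S n) k' end.

Lemma count_ext_full k u : count_ext (fun _ => true) u k = full_count (length u) k.
Proof.
  revert u; induction k as [|k IH]; intro u; [reflexivity|]. cbn [count_ext full_count].
  rewrite (map_ext_in _ (fun _ => full_count (S (length u)) k)), list_sum_map_const, length_seq.
  - reflexivity.
  - intros l _. rewrite IH, length_app. simpl. f_equal. lia.
Qed.

Lemma full_count_pos n k : 1 <= full_count n k.
Proof.
  revert n; induction k as [|k IH]; intro n; simpl; [lia|].
  pose proof (M_ge4 n). specialize (IH (S n)). nia.
Qed.

Lemma deficit_sum_bound (present : nat -> bool) (c : nat -> nat) (F B : nat) L :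
  (forall l, In l L -> if present l then c l <= F /\ (F - c l) * B <= F else c l = 0) ->
  list_sum (map c L) <= length L * F /\
  (length L * F - list_sum (map c L)) * B <=
    length L * F + length (filter (fun l => negb (present l)) L) * (F * B).
Proof.
  induction L as [|x L IH]; intro Hc; simpl; [lia|].
  destruct IH as [IH1 IH2]; [intros l Hl; apply Hc; right; exact Hl|].
  specialize (Hc x (or_introl eq_refl)). destruct (present x); simpl.
  - destruct Hc as [Hc1 Hc2]. split; [lia|].
    replace (F + length L * F - (c x + list_sum (map c L)))
      with ((F - c x) + (length L * F - list_sum (map c L))) by lia.
    rewrite Nat.mul_add_distr_r. lia.
  - rewrite Hc. split; [lia|].
    replace (F + length L * F - (0 + list_sum (map c L)))
      with (F + (length L * F - list_sum (map c L))) by lia.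
    rewrite Nat.mul_add_distr_r. lia.
Qed.

Lemma count_ext_deficiency p s : Etilde p -> is_stem p s ->
  forall k u, p u = true -> prefix s u ->
  count_ext p u k <= full_count (length u) k /\
  (full_count (length u) k - count_ext p u k) * 2 ^ (length u + 1) <= full_count (length u) k.
Proof.
  intros HE Hst k. induction k as [|k IH]; intros u Hu Hsu.
  - simpl. rewrite Hu. lia.
  - cbn [count_ext full_count]. set (n := length u). set (F := full_count (S n) k).
    assert (Hsum := deficit_sum_bound (fun l => p (u ++ [l])) (fun l => count_ext p (u ++ [l]) k)
                      F (2 ^ (n + 2)) (seq 0 (M n))).
    rewrite length_seq, <- deficit_filter in Hsum. destruct Hsum as [Hsum1 Hsum2].
    { intros l _. destruct (p (u ++ [l])) eqn:E.
      - destruct (IH (u ++ [l]) E) as [A B]; [eapply prefix_trans; [exact Hsu | apply prefix_app]|].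
        rewrite length_app in A, B. simpl in A, B. fold n in A, B.
        replace (n + 1) with (S n) in A, B by lia. replace (S n + 1) with (n + 2) in B by lia.
        split; assumption.
      - apply count_ext_absent; [apply HE | exact E]. }
    assert (Hd := deficit_ok_le_a _ _ _ (Etilde_deficit_ok p s u HE Hst Hu Hsu)).
    fold n in Hd. pose proof (pow2_le_a n) as Ha. rewrite M_sqr in *.
    replace (2 ^ (n + 2)) with (2 * 2 ^ (n + 1)) in * by (rewrite !Nat.pow_add_r; simpl; lia).
    set (P := 2 ^ (n + 1)) in *.
    change (fold_right Nat.add 0 ?L) with (list_sum L). set (C := list_sum _) in *.
    assert (Hmiss : deficit p u * (F * (2 * P)) <= a n * a n * F).
    { replace (deficit p u * (F * (2 * P))) with (deficit p u * (2 * P) * F) by ring.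
      apply Nat.mul_le_mono_r, Nat.mul_le_mono; assumption. }
    split; [exact Hsum1 | nia].
Qed.

Lemma count_ext_from_stem p s : subtree p -> is_stem p s ->
  forall k j u, prefix u s -> length u + j = length s -> count_ext p u (j + k) = count_ext p s k.
Proof.
  intros Hs Hst k j. induction j as [|j IH]; intros u Hus Hl.
  - rewrite (prefix_length_eq u s Hus) by lia. reflexivity.
  - cbn [Nat.add count_ext]. set (x := nth (length u) s 0).
    assert (Hx : x < M (length u)) by (apply Hs; [apply Hst | lia]).
    rewrite (list_sum_map_single _ _ x Hx).
    + apply IH; [apply prefix_next; auto; lia | rewrite length_app; simpl; lia].
    + intros l Hlx. apply count_ext_absent; [exact Hs|].
      destruct (p (u ++ [l])) eqn:E; [exfalso|reflexivity].
      apply Hlx. unfold x. destruct (stem_comparable p s _ Hs Hst E) as [P|P].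
      * apply prefix_length in P as Hlen. rewrite length_app in Hlen. simpl in Hlen.
        rewrite (prefix_length_eq _ _ P), nth_middle by (rewrite length_app; simpl; lia).
        reflexivity.
      * rewrite (prefix_nth _ _ P (length u)), nth_middle by (rewrite length_app; simpl; lia).
        reflexivity.
Qed.

Lemma ratio_ge_of_deficiency (c F m : nat) : 0 < F -> 1 <= m -> 2 * m * F <= 2 * m * c + F ->
  (INR c / INR F >= 1 - 1 / INR m / 2)%R.
Proof.
  intros HF Hm H. apply le_INR in H. rewrite !plus_INR, !mult_INR in H. simpl (INR 2) in H.
  apply lt_0_INR in HF. apply (le_INR 1) in Hm. simpl (INR 1) in Hm.
  apply Rle_ge, (Rmult_le_reg_r (2 * INR m * INR F)); [nra|].
  replace (INR c / INR F * (2 * INR m * INR F))%R with (2 * INR m * INR c)%R by (field; lra).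
  replace ((1 - 1 / INR m / 2) * (2 * INR m * INR F))%R with (2 * INR m * INR F - INR F)%R
    by (field; lra).
  lra.
Qed.

Theorem level_ratio_ge (p : tree) (l : R) (s : list nat) (h : nat) :
  Etilde p -> is_loss p l -> is_stem p s -> length s < h ->
  (INR (level_card p h) / INR (cone_card s h) >= 1 - l / 2)%R.
Proof.
  intros HE (m & (Hm2 & s' & Hs' & Hm3 & _) & _ & ->) Hst Hh.
  assert (Hsub : subtree p) by apply HE.
  rewrite (stem_unique p s' s Hsub Hs' Hst) in Hm3.
  unfold level_card, cone_card.
  replace h with (length s + (h - length s)) at 1 by lia.
  rewrite (count_ext_from_stem p s Hsub Hst (h - length s) (length s) [] (prefix_nil s)),
    count_ext_full by reflexivity.
  destruct (count_ext_deficiency p s HE Hst (h - length s) s (proj1 (proj1 Hst)) (prefix_refl s))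
    as [Hle Hdef].
  set (c := count_ext p s (h - length s)) in *.
  set (F := full_count (length s) (h - length s)) in *.
  assert (Hm : 2 * m <= 2 ^ (length s + 1)).
  { rewrite Nat.pow_add_r. pose proof (Nat.pow_gt_lin_r 2 (length s)). simpl. lia. }
  assert (Hdef' : 2 * m * (F - c) <= F).
  { eapply Nat.le_trans; [|exact Hdef]. rewrite Nat.mul_comm. apply Nat.mul_le_mono_l, Hm. }
  pose proof (full_count_pos (length s) (h - length s)).
  apply ratio_ge_of_deficiency; [lia | lia |].
  rewrite Nat.mul_sub_distr_l in Hdef'. lia.
Qed.

Theorem lemma1 :
  (* (a) *)
  (forall (h : nat) (p : nat -> tree) (s : list nat),
     length s = h ->
     (forall i, i < pi h -> Etilde (p i)) ->
     (forall i, i < pi h -> p i s = true /\ exists st, is_stem (p i) st /\ prefix st s) ->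
     exists q, Etilde q /\ forall i, i < pi h -> leE q (p i))
  /\
  (* (b) *)
  (fg_linked rho pi /\ ccc)
  /\
  (* (c) : the generic branch is eventually different from every ground-model real,
     stated as the density of the corresponding conditions *)
  (forall (x : nat -> nat) (p : tree), Etilde p ->
     exists q, Etilde q /\ leE q p /\
       exists n, forall t, q t = true ->
         forall m, n <= m -> m < length t -> nth m t 0 <> x m)
  /\
  (* (d) *)
  (forall (p : tree) (l : R) (s : list nat) (h : nat),
     Etilde p -> is_loss p l -> is_stem p s -> length s < h ->
     (INR (level_card p h) / INR (cone_card s h) >= 1 - l / 2)%R).
Proof.
  split; [exact common_extension|].
  split; [split; [exact fg_linked_rho_pi | exact (fg_linked_ccc rho pi pi_ge2 fg_linked_rho_pi)]|].
  split; [exact eventually_different_dense | exact level_ratio_ge].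
Qed.
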